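(* Consider any realization of a run of Algorithm 4 (described in the context). For every $k\in\mathcal{K}$, \[ m_k(x_k)-m_k(x_k+s_k)\ \ge\ \tfrac14\,\epsilon_H\,\|s_k\|^2 . \]
   Context: Let $f:\mathbb{R}^n\to\mathbb{R}$ be twice continuously differentiable with gradient $g=\nabla f$ and Hessian $H=\nabla^2f$; $\|\cdot\|$ is the Euclidean norm, $\lambda_{\min}$ the smallest eigenvalue, $\mathbb{S}^n$ the real symmetric $n\times n$ matrices. Write $f_k=f(x_k)$, $g_k=g(x_k)$, $H_k=H(x_k)$, $m_k(x)=f_k+g_k^T(x-x_k)+\tfrac12(x-x_k)^TH_k(x-x_k)$. Exact arithmetic is assumed. Algorithm 2 (truncated CG; inputs nonzero $g$, $H\in\mathbb{S}^n$, $\epsilon>0$, $\delta>0$, $\zeta\in(0,1)$, flag capCG, and $M\ge\|H\|$): $k_{\max}=\min\{n,\tfrac12\sqrt{\kappa}\ln(4\kappa^{3/2}/\zeta)\}$ with $\kappa=(M+2\epsilon)/\epsilon$ if capCG is true, else $k_{\max}=n$. Set $y_0=0,r_0=g,p_0=-g,j=0$. While $j<k_{\max}$: if $p_j^T(H+2\epsilon I)p_j\le\epsilon\|p_j\|^2$, return $s=y_j+\sigma p_j$ with $\sigma\ge0$, $\|s\|=\delta$, flag BND-NEG; set $\alpha_j=\|r_j\|^2/(p_j^T(H+2\epsilon I)p_j)$, $y_{j+1}=y_j+\alpha_jp_j$; if $\|y_{j+1}\|\ge\delta$, return $s=y_j+\sigma p_j$ with $\sigma\ge0$, $\|s\|=\delta$,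 flag BND-NORM; set $r_{j+1}=r_j+\alpha_j(H+2\epsilon I)p_j$; if $\|r_{j+1}\|\le\tfrac\zeta2\min\{\|g\|,\epsilon\|y_{j+1}\|\}$, return $s=y_{j+1}$, flag INT-RES; set $\beta_{j+1}=\|r_{j+1}\|^2/\|r_j\|^2$, $p_{j+1}=-r_{j+1}+\beta_{j+1}p_j$, $j\leftarrow j+1$. On loop exit return $s=y_j$, flag INT-MAX. Algorithm 3 (minimum eigenvalue oracle, MEO; inputs $g$, $H\in\mathbb{S}^n$, $\epsilon>0$, $\delta>0$, $\xi\in(0,1)$, $M\ge\|H\|$): a possibly randomized procedure that either returns $s=\pm\delta v$ with $\|v\|=1$, $v^THv\le-\epsilon/2$, satisfying $g^Ts\le0$, $s^THs\le-\tfrac12\epsilon\|s\|^2$, $\|s\|=\delta$, or returns an indication that $H\succeq-\epsilon I$. Algorithm 4 (inexact trust-region Newton-CG). Inputs: $\epsilon_g,\epsilon_H>0$; $\gamma_1\in(0,1)$, $\gamma_2\ge1$, $\psi\in(1/\gamma_2,1]$; $x_0$; $\delta_0>0$; $\delta_{\max}\ge\delta_0$; $\eta\in(0,1)$; $\zeta\in(0,1)$; $\xi\in[0,1)$; capCG; $M\ge L_g$. For $k=0,1,\dots$: evaluate $g_k,H_k$. If $g_k\ne0$, call Algorithm 2 with $(g_k,H_k,\epsilon_H,\delta_k,\zeta,\text{capCG},M)$ obtaining $s_k^{CG}$ and flag outCG; else set $s_k^{CG}=0$, outCG$=$INT-RES. If outCG$\in\{$BND-NEG, BND-NORM$\}$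 or ($\|g_k\|>\epsilon_g$ and outCG$=$INT-RES), set $s_k=s_k^{CG}$. Otherwise call Algorithm 3 with $(g_k,H_k,\epsilon_H,\delta_k,\xi,M)$; if it indicates $H_k\succeq-\epsilon_HI$, return $x_k$ (terminate), else take its output as $s_k$. Set $\rho_k=\frac{f_k-f(x_k+s_k)}{m_k(x_k)-m_k(x_k+s_k)}$. If $\rho_k\ge\eta$: $x_{k+1}=x_k+s_k$ and $\delta_{k+1}=\min\{\gamma_2\delta_k,\delta_{\max}\}$ if $\|s_k\|\ge\psi\delta_k$, else $\delta_{k+1}=\delta_k$. If $\rho_k<\eta$: $x_{k+1}=x_k$, $\delta_{k+1}=\gamma_1\|s_k\|$. $\mathcal{K}$ is the set of indices $k$ such that iteration $k$ is completed without termination (for the given realization). *)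

From HB Require Import structures.
From mathcomp Require Import all_boot all_order all_algebra.
From mathcomp Require Import all_classical all_reals all_analysis.
Set Implicit Arguments. Unset Strict Implicit. Unset Printing Implicit Defensive.
Import Order.TTheory GRing.Theory Num.Theory.
Import numFieldNormedType.Exports.
Local Open Scope ring_scope.

Section Defs.
Variable R : realType.
Variable n : nat.
Notation vec := 'cV[R]_n.
Notation mat := 'M[R]_n.

Definition dot (u v : vec) : R := (u^T *m v) 0 0.
Definition enorm (v : vec) : R := Num.sqrt (dot v v).
Definition qform (A : mat) (v : vec) : R := dot v (A *m v).

Definition symmetric_mx (A : mat) : Prop := A^T = A.

(* f is C^2 with gradient g and Hessian H (Frechet derivatives; all norms
   on R^n are equivalent so the max-norm topology of mathcomp-analysis is fine). *)
Definition C2_grad_hess (f : vec -> R) (g : vec -> vec) (H : vec -> mat) : Prop :=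
  (forall x, differentiable f x /\ forall v, ('d f x) v = dot (g x) v) /\
  (forall x, differentiable g x /\ forall v, ('d g x) v = H x *m v) /\
  continuous H.

Definition model (fk : R) (gk : vec) (Hk : mat) (xk x : vec) : R :=
  fk + dot gk (x - xk) + 2^-1 * qform Hk (x - xk).

Inductive cg_flag := BND_NEG | BND_NORM | INT_RES | INT_MAX.

Definition use_cg_step (out : cg_flag) (big_grad : bool) : bool :=
  match out with
  | BND_NEG | BND_NORM => true
  | INT_RES => big_grad
  | INT_MAX => false
  end.

Definition cg_kmax (eps zeta : R) (capCG : bool) (M : R) : R :=
  if capCG then
    let kappa := (M + 2 * eps) / eps in
    Num.min (n%:R) (2^-1 * Num.sqrt kappa * ln (4 * (kappa * Num.sqrt kappa) / zeta))
  else n%:R.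

Definition Hbar (H : mat) (eps : R) : mat := H + (2 * eps)%:M.

Definition cg_alpha (H : mat) (eps : R) (st : vec * vec * vec) : R :=
  let '(y, r, p) := st in enorm r ^+ 2 / qform (Hbar H eps) p.

Definition cg_next (H : mat) (eps : R) (st : vec * vec * vec) : vec * vec * vec :=
  let '(y, r, p) := st in
  let a := cg_alpha H eps st in
  let y' := y + a *: p in
  let r' := r + a *: (Hbar H eps *m p) in
  let b := enorm r' ^+ 2 / enorm r ^+ 2 in
  let p' := - r' + b *: p in
  (y', r', p').

Fixpoint cg_state (g : vec) (H : mat) (eps : R) (j : nat) : vec * vec * vec :=
  match j with
  | 0 => (0, g, - g)
  | j'.+1 => cg_next H eps (cg_state g H eps j')
  end.

Definition cg_continues (g : vec) (H : mat) (eps delta zeta : R) (capCG : bool)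
  (M : R) (j : nat) : Prop :=
  let '(y, r, p) := cg_state g H eps j in
  let '(y', r', _) := cg_state g H eps j.+1 in
  j%:R < cg_kmax eps zeta capCG M /\
  eps * enorm p ^+ 2 < qform (Hbar H eps) p /\
  enorm y' < delta /\
  Num.min (enorm g) (eps * enorm y') * (zeta / 2) < enorm r'.

Definition cg_returns (g : vec) (H : mat) (eps delta zeta : R) (capCG : bool)
  (M : R) (j : nat) (s : vec) (fl : cg_flag) : Prop :=
  let '(y, r, p) := cg_state g H eps j in
  let '(y', r', _) := cg_state g H eps j.+1 in
  let boundary := exists sigma : R, 0 <= sigma /\ s = y + sigma *: p /\ enorm s = delta in
  (cg_kmax eps zeta capCG M <= j%:R /\ s = y /\ fl = INT_MAX) \/
  (j%:R < cg_kmax eps zeta capCG M /\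
   (   (qform (Hbar H eps) p <= eps * enorm p ^+ 2 /\ boundary /\ fl = BND_NEG)
    \/ (eps * enorm p ^+ 2 < qform (Hbar H eps) p /\ delta <= enorm y' /\
        boundary /\ fl = BND_NORM)
    \/ (eps * enorm p ^+ 2 < qform (Hbar H eps) p /\ enorm y' < delta /\
        enorm r' <= (zeta / 2) * Num.min (enorm g) (eps * enorm y') /\
        s = y' /\ fl = INT_RES))).

(* (s, fl) is a possible output of Algorithm 2 on inputs (g, H, eps, delta, zeta, capCG, M) *)
Definition cg_output (g : vec) (H : mat) (eps delta zeta : R) (capCG : bool)
  (M : R) (s : vec) (fl : cg_flag) : Prop :=
  exists J : nat,
    (forall j, (j < J)%N -> cg_continues g H eps delta zeta capCG M j) /\
    cg_returns g H eps delta zeta capCG M J s fl.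

Definition meo_step (g : vec) (H : mat) (eps delta : R) (s : vec) : Prop :=
  exists v : vec,
    enorm v = 1 /\ qform H v <= - (eps / 2) /\
    (s = delta *: v \/ s = - (delta *: v)) /\
    dot g s <= 0 /\ qform H s <= - (eps / 2) * enorm s ^+ 2 /\ enorm s = delta.

Record tr_params := TrParams {
  eps_g : R; eps_H : R; gamma1 : R; gamma2 : R; psi : R;
  delta0 : R; delta_max : R; eta : R; zeta : R; xi : R; capCG : bool; Mc : R }.

Definition valid_params (P : tr_params) : Prop :=
  0 < eps_g P /\ 0 < eps_H P /\ 0 < gamma1 P < 1 /\ 1 <= gamma2 P /\
  (gamma2 P)^-1 < psi P <= 1 /\ 0 < delta0 P /\ delta0 P <= delta_max P /\
  0 < eta P < 1 /\ 0 < zeta P < 1 /\ 0 <= xi P < 1.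

(* The step-selection part of iteration k (from x_k, delta_k) when the iteration
   does not terminate: s is the step s_k. *)
Definition step_chosen (P : tr_params) (g : vec -> vec) (H : vec -> mat)
  (xk : vec) (dk : R) (s : vec) : Prop :=
  exists (sCG : vec) (out : cg_flag),
    (if g xk != 0 then cg_output (g xk) (H xk) (eps_H P) dk (zeta P) (capCG P) (Mc P) sCG out
     else sCG = 0 /\ out = INT_RES) /\
    (if use_cg_step out (eps_g P < enorm (g xk))
     then s = sCG
     else meo_step (g xk) (H xk) (eps_H P) dk s).

(* Iteration k terminates at (x_k, delta_k): MEO is called and indicates H_k >= -eps_H I. *)
Definition terminates (P : tr_params) (g : vec -> vec) (H : vec -> mat)
  (xk : vec) (dk : R) : Prop :=
  exists (sCG : vec) (out : cg_flag),
    (if g xk != 0 then cg_output (g xk) (H xk) (eps_H P) dk (zeta P) (capCG P) (Mc P) sCG out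
     else sCG = 0 /\ out = INT_RES) /\
    ~~ (use_cg_step out (eps_g P < enorm (g xk))).

Definition rho (f : vec -> R) (g : vec -> vec) (H : vec -> mat) (xk s : vec) : R :=
  (f xk - f (xk + s)) /
  (model (f xk) (g xk) (H xk) xk xk - model (f xk) (g xk) (H xk) xk (xk + s)).

Definition update (P : tr_params) (f : vec -> R) (g : vec -> vec) (H : vec -> mat)
  (xk : vec) (dk : R) (s : vec) (xk1 : vec) (dk1 : R) : Prop :=
  if eta P <= rho f g H xk s then
    xk1 = xk + s /\
    dk1 = (if psi P * dk <= enorm s then Num.min (gamma2 P * dk) (delta_max P) else dk)
  else xk1 = xk /\ dk1 = gamma1 P * enorm s.

(* K for a run terminating at iteration T (T = None: never terminates). *)
Definition in_K (T : option nat) (k : nat) : Prop :=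
  match T with None => True | Some t => (k < t)%N end.

Definition alg4_run (P : tr_params) (f : vec -> R) (g : vec -> vec) (H : vec -> mat)
  (x0 : vec) (x : nat -> vec) (d : nat -> R) (s : nat -> vec) (T : option nat) : Prop :=
  x 0%N = x0 /\ d 0%N = delta0 P /\
  (forall k, in_K T k ->
     step_chosen P g H (x k) (d k) (s k) /\
     update P f g H (x k) (d k) (s k) (x k.+1) (d k.+1)) /\
  (forall t, T = Some t -> terminates P g H (x t) (d t)).

End Defs.

(* A minimum-eigenvalue-oracle step has g's <= 0 and s'Hs <= -eps_H/2 |s|^2, which
   already gives the bound.  Truncated CG is plain CG on Hbar = H + 2 eps_H I for as
   long as it runs.  Conjugacy of the directions and orthogonality of the residuals give
   g = r_J - Hbar y_J, y_J'r_J = 0, y_J'Hbar p_J = 0, r_J'p_J = -|r_J|^2 and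
   y_J'p_J >= 0, so the Hbar-model decrease at y_J + sigma p_J equals
   y_J'Hbar y_J/2 + sigma |r_J|^2 - sigma^2 p_J'Hbar p_J/2.  It is nonnegative for
   0 <= sigma <= alpha_J, which covers the interior exits and, since
   |y_J + sigma p_J| increases with sigma, the exit at the trust-region boundary; under
   the negative-curvature exit it is at least -eps_H/2 |s|^2.  Adding eps_H |s|^2
   turns every case into an H-model decrease of at least eps_H/2 |s|^2. *)

From HB Require Import structures.
From mathcomp Require Import all_boot all_order all_algebra.
From mathcomp Require Import all_classical all_reals all_analysis.
From mathcomp Require Import ring lra.
Import Order.TTheory GRing.Theory Num.Theory.
Import numFieldNormedType.Exports.
Local Open Scope ring_scope.

Set Implicit Arguments.
Unset Strict Implicit.
Unset Printing Implicit Defensive.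

Section EuclideanForms.
Variables (R : realType) (n : nat).
Implicit Types (u v w : 'cV[R]_n) (A : 'M[R]_n) (a : R).

Lemma dotE u v : dot u v = \sum_i u i 0 * v i 0.
Proof. by rewrite /dot mxE; apply: eq_bigr => i _; rewrite mxE. Qed.

Lemma dotC u v : dot u v = dot v u.
Proof. by rewrite !dotE; apply: eq_bigr => i _; rewrite mulrC. Qed.

Lemma dotDl u v w : dot (u + v) w = dot u w + dot v w.
Proof. by rewrite !dotE -big_split; apply: eq_bigr => i _; rewrite mxE mulrDl. Qed.

Lemma dotZl a u v : dot (a *: u) v = a * dot u v.
Proof. by rewrite !dotE mulr_sumr; apply: eq_bigr => i _; rewrite mxE mulrA. Qed.

Lemma dotNl u v : dot (- u) v = - dot u v.
Proof. by rewrite -scaleN1r dotZl mulN1r. Qed.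

Lemma dot0l v : dot 0 v = 0.
Proof. by rewrite -(scale0r 0) dotZl mul0r. Qed.

Lemma dotDr u v w : dot u (v + w) = dot u v + dot u w.
Proof. by rewrite dotC dotDl !(dotC u). Qed.

Lemma dotZr a u v : dot u (a *: v) = a * dot u v.
Proof. by rewrite dotC dotZl dotC. Qed.

Lemma dotNr u v : dot u (- v) = - dot u v.
Proof. by rewrite dotC dotNl dotC. Qed.

Lemma dot0r v : dot v 0 = 0.
Proof. by rewrite dotC dot0l. Qed.

Lemma dot_ge0 v : 0 <= dot v v.
Proof. by rewrite dotE; apply: sumr_ge0 => i _; rewrite -expr2 sqr_ge0. Qed.

Lemma dot_gt0 v : (0 < dot v v) = (v != 0).
Proof.
rewrite lt_def dot_ge0 andbT; congr negb; apply/eqP/eqP => [|->]; last exact: dot0l.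
rewrite dotE => /eqP; rewrite psumr_eq0 => [/allP v0|i _]; last by rewrite -expr2 sqr_ge0.
apply/matrixP => i j; rewrite ord1 mxE.
by have := v0 i (mem_index_enum i); rewrite mulf_eq0 orbb => /eqP.
Qed.

Lemma enorm_ge0 v : 0 <= enorm v.
Proof. exact: sqrtr_ge0. Qed.

Lemma enorm_sq v : enorm v ^+ 2 = dot v v.
Proof. by rewrite sqr_sqrtr // dot_ge0. Qed.

Lemma enorm_gt0 v : (0 < enorm v) = (v != 0).
Proof. by rewrite sqrtr_gt0 dot_gt0. Qed.

Lemma dot_mulmx_sym A u v : A^T = A -> dot u (A *m v) = dot (A *m u) v.
Proof. by move=> A_sym; rewrite /dot trmx_mul A_sym mulmxA. Qed.

Lemma qformD A u v : A^T = A ->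
  qform A (u + v) = qform A u + 2 * dot u (A *m v) + qform A v.
Proof.
move=> A_sym; rewrite /qform mulmxDr !dotDl !dotDr.
by rewrite [dot v (A *m u)]dot_mulmx_sym // [dot (A *m v) u]dotC; ring.
Qed.

Lemma qformZ A a u : qform A (a *: u) = a ^+ 2 * qform A u.
Proof. by rewrite /qform -scalemxAr dotZl dotZr mulrA -expr2. Qed.

End EuclideanForms.

Section ConjugateGradient.
Variables (R : realType) (n : nat).

Definition cg_stepsize (A : 'M[R]_n) (r p : 'cV[R]_n) : R := enorm r ^+ 2 / qform A p.

Record cg_recursion (A : 'M[R]_n) (g : 'cV[R]_n) (y r p : nat -> 'cV[R]_n) : Prop :=
  CGRecursion {
    cg_y0 : y 0%N = 0;
    cg_r0 : r 0%N = g;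
    cg_p0 : p 0%N = - g;
    cg_yS : forall j, y j.+1 = y j + cg_stepsize A (r j) (p j) *: p j;
    cg_rS : forall j, r j.+1 = r j + cg_stepsize A (r j) (p j) *: (A *m p j);
    cg_pS : forall j, p j.+1 = - r j.+1 + (enorm (r j.+1) ^+ 2 / enorm (r j) ^+ 2) *: p j
  }.

Variables (A : 'M[R]_n) (g : 'cV[R]_n) (y r p : nat -> 'cV[R]_n).
Hypothesis A_sym : A^T = A.
Hypothesis cg : cg_recursion A g y r p.

Local Notation alpha j := (cg_stepsize A (r j) (p j)).
Local Notation beta j := (enorm (r j.+1) ^+ 2 / enorm (r j) ^+ 2).

Definition cg_regular (J : nat) : Prop :=
  forall i, (i < J)%N -> 0 < qform A (p i) /\ r i != 0.

(* Only the pairs ending at j: this invariant alone already closes the induction on j. *)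
Definition cg_orthogonal (j : nat) : Prop :=
  forall i, (i < j)%N -> dot (r i) (r j) = 0 /\ dot (p i) (A *m p j) = 0.

Lemma cg_regularW J K : (K <= J)%N -> cg_regular J -> cg_regular K.
Proof. by move=> le_KJ reg i lt_iK; apply: reg; apply: leq_trans le_KJ. Qed.

Lemma cg_res0 : r 0%N = - p 0%N.
Proof. by rewrite (cg_p0 cg) (cg_r0 cg) opprK. Qed.

Lemma cg_resS j : r j.+1 = - p j.+1 + beta j *: p j.
Proof. by rewrite (cg_pS cg) opprD opprK addrNK. Qed.

Lemma cg_res_diff j : alpha j *: (A *m p j) = r j.+1 - r j.
Proof. by rewrite (cg_rS cg) addrC addKr. Qed.

Lemma cg_stepsizeK j : qform A (p j) != 0 -> alpha j * qform A (p j) = dot (r j) (r j).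
Proof. by move=> Q_neq0; rewrite /cg_stepsize divfK // enorm_sq. Qed.

Lemma cg_stepsize_gt0 j : 0 < qform A (p j) -> r j != 0 -> 0 < alpha j.
Proof. by move=> Q_gt0 r_neq0; rewrite divr_gt0 // enorm_sq dot_gt0. Qed.

Lemma dot_res_Adir j i : cg_orthogonal j -> (i <= j)%N ->
  dot (r i) (A *m p j) = - dot (p i) (A *m p j).
Proof.
move=> orth; case: i => [|i] lt_ij; first by rewrite cg_res0 dotNl.
by rewrite cg_resS dotDl dotNl dotZl (proj2 (orth i lt_ij)) mulr0 addr0.
Qed.

Lemma cg_res_orthS j : cg_regular j.+1 -> cg_orthogonal j ->
  forall i, (i <= j)%N -> dot (r i) (r j.+1) = 0.
Proof.
move=> reg orth i le_ij; rewrite (cg_rS cg) dotDr dotZr dot_res_Adir //.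
move: le_ij; rewrite leq_eqVlt => /predU1P[-> | lt_ij].
  have [Q_gt0 _] := reg j (ltnSn j).
  by rewrite mulrN cg_stepsizeK ?lt0r_neq0 // subrr.
by have [-> ->] := orth i lt_ij; rewrite oppr0 mulr0 addr0.
Qed.

Lemma cg_dir_conjS j : cg_regular j.+1 -> cg_orthogonal j ->
  forall i, (i <= j)%N -> dot (p i) (A *m p j.+1) = 0.
Proof.
move=> reg orth i le_ij.
have [Q_gt0 r_neq0] := reg i le_ij.
have alpha_neq0 := lt0r_neq0 (cg_stepsize_gt0 Q_gt0 r_neq0).
have Ar : alpha i * dot (p i) (A *m r j.+1) = dot (r i.+1) (r j.+1) - dot (r i) (r j.+1).
  by rewrite dot_mulmx_sym // -dotZl cg_res_diff dotDl dotNl.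
rewrite (cg_pS cg) mulmxDr mulmxN -scalemxAr dotDr dotNr dotZr.
move: le_ij; rewrite leq_eqVlt => /predU1P[eq_ij | lt_ij]; last first.
  rewrite (cg_res_orthS reg orth lt_ij) (cg_res_orthS reg orth (ltnW lt_ij)) in Ar.
  rewrite subrr -(mulr0 (alpha i)) in Ar.
  by rewrite (mulfI alpha_neq0 Ar) (proj2 (orth i lt_ij)) oppr0 mulr0 addr0.
subst i; rewrite (cg_res_orthS reg orth (leqnn j)) subr0 in Ar.
suff -> : dot (p j) (A *m r j.+1) = beta j * qform A (p j) by rewrite addNr.
apply: (mulfI alpha_neq0); rewrite Ar /cg_stepsize !enorm_sq.
by field; rewrite !lt0r_neq0 ?dot_gt0.
Qed.

Lemma cg_orthogonal_all J : cg_regular J -> cg_orthogonal J.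
Proof.
elim: J => [|j IH] reg i //.
have orth := IH (cg_regularW (leqnSn j) reg).
rewrite ltnS => le_ij; split; [exact: cg_res_orthS | exact: cg_dir_conjS].
Qed.

Lemma cg_res_affine j : r j = A *m y j + g.
Proof.
elim: j => [|j IH]; first by rewrite (cg_r0 cg) (cg_y0 cg) mulmx0 add0r.
by rewrite (cg_rS cg) (cg_yS cg) IH mulmxDr -scalemxAr addrAC.
Qed.

Lemma dot_iter j u : (forall i, (i < j)%N -> dot (p i) u = 0) -> dot (y j) u = 0.
Proof.
elim: j => [|j IH] pu; first by rewrite (cg_y0 cg) dot0l.
rewrite (cg_yS cg) dotDl dotZl (pu j (ltnSn j)) mulr0 addr0.
by apply: IH => i /ltnW; apply: pu.
Qed.

Lemma dot_res_dir J i : cg_regular J -> (i < J)%N -> dot (r J) (p i) = 0.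
Proof.
move=> /cg_orthogonal_all orth; elim: i => [|i IH] lt_iJ.
  by rewrite (cg_p0 cg) -(cg_r0 cg) dotNr dotC (proj1 (orth 0%N lt_iJ)) oppr0.
rewrite (cg_pS cg) dotDr dotNr dotZr IH ?(ltnW lt_iJ) // dotC.
by rewrite (proj1 (orth _ lt_iJ)) oppr0 mulr0 addr0.
Qed.

Lemma dot_res_dir_self J : cg_regular J -> dot (r J) (p J) = - dot (r J) (r J).
Proof.
case: J => [|j] reg; first by rewrite (cg_p0 cg) -(cg_r0 cg) dotNr.
by rewrite (cg_pS cg) dotDr dotNr dotZr (dot_res_dir reg) // mulr0 addr0.
Qed.

Lemma dot_iter_Adir J : cg_regular J -> dot (y J) (A *m p J) = 0.
Proof. by move=> /cg_orthogonal_all orth; apply: dot_iter => i /orth[]. Qed.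

Lemma dot_iter_res J : cg_regular J -> dot (y J) (r J) = 0.
Proof. by move=> reg; apply: dot_iter => i lt_iJ; rewrite dotC dot_res_dir. Qed.

Lemma qform_iter_ge0 J : cg_regular J -> 0 <= qform A (y J).
Proof.
elim: J => [|j IH] reg; first by rewrite (cg_y0 cg) /qform dot0l.
have [Q_gt0 _] := reg j (ltnSn j).
have regj := cg_regularW (leqnSn j) reg.
rewrite (cg_yS cg) qformD // qformZ -scalemxAr dotZr dot_iter_Adir // !mulr0 addr0.
by rewrite addr_ge0 ?IH // mulr_ge0 ?sqr_ge0 ?ltW.
Qed.

Lemma dot_iter_dir_ge0 J : cg_regular J -> 0 <= dot (y J) (p J).
Proof.
elim: J => [|j IH] reg; first by rewrite (cg_y0 cg) dot0l.
have [Q_gt0 r_neq0] := reg j (ltnSn j).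
rewrite (cg_pS cg) dotDr dotNr dot_iter_res // oppr0 add0r dotZr (cg_yS cg) dotDl dotZl.
apply: mulr_ge0; first by rewrite divr_ge0 ?sqr_ge0.
apply: addr_ge0; first by apply: IH; apply: cg_regularW reg.
by rewrite mulr_ge0 ?dot_ge0 ?ltW ?cg_stepsize_gt0.
Qed.

Lemma cg_decrease_along_dir J (sigma : R) : cg_regular J ->
  - dot g (y J + sigma *: p J) - 2^-1 * qform A (y J + sigma *: p J)
  = 2^-1 * qform A (y J) + sigma * dot (r J) (r J) - 2^-1 * (sigma ^+ 2 * qform A (p J)).
Proof.
move=> reg.
have g_res : g = r J - A *m y J by rewrite cg_res_affine addrC addKr.
have gy : dot g (y J) = - qform A (y J).
  by rewrite g_res dotDl dotNl dotC dot_iter_res // add0r dotC.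
have gp : dot g (p J) = - dot (r J) (r J).
  by rewrite g_res dotDl dotNl dot_res_dir_self // -dot_mulmx_sym // dot_iter_Adir // subr0.
rewrite dotDr dotZr gy gp qformD // qformZ -scalemxAr dotZr dot_iter_Adir //; by field.
Qed.

Lemma cg_iter_decrease J : cg_regular J -> 0 <= - dot g (y J) - 2^-1 * qform A (y J).
Proof.
move=> reg; have := cg_decrease_along_dir 0 reg; rewrite scale0r addr0 => ->.
have := qform_iter_ge0 reg; lra.
Qed.

Lemma cg_negcurv_decrease J (sigma eps : R) : cg_regular J -> 0 <= sigma -> 0 <= eps ->
  qform A (p J) <= eps * enorm (p J) ^+ 2 ->
  - (eps / 2) * enorm (y J + sigma *: p J) ^+ 2
    <= - dot g (y J + sigma *: p J) - 2^-1 * qform A (y J + sigma *: p J).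
Proof.
move=> reg sigma_ge0 eps_ge0 negcurv; rewrite cg_decrease_along_dir // !enorm_sq in negcurv *.
rewrite dotDl !dotDr !dotZl !dotZr [dot (p J) (y J)]dotC.
have := qform_iter_ge0 reg; have yp := dot_iter_dir_ge0 reg.
have : 0 <= eps * dot (y J) (y J) by rewrite mulr_ge0 ?dot_ge0.
have : 0 <= eps * (sigma * dot (y J) (p J)) by rewrite !mulr_ge0.
have : 0 <= sigma * dot (r J) (r J) by rewrite mulr_ge0 ?dot_ge0.
have : sigma ^+ 2 * qform A (p J) <= sigma ^+ 2 * (eps * dot (p J) (p J)).
  by rewrite ler_wpM2l ?sqr_ge0.
lra.
Qed.

Lemma boundary_le_stepsize J (sigma : R) : cg_regular J.+1 -> 0 <= sigma ->
  enorm (y J + sigma *: p J) <= enorm (y J.+1) -> sigma <= alpha J.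
Proof.
move=> reg sigma_ge0 le_norm; have [Q_gt0 r_neq0] := reg J (ltnSn J).
have alpha_gt0 := cg_stepsize_gt0 Q_gt0 r_neq0.
have pp_gt0 : 0 < dot (p J) (p J).
  by rewrite dot_gt0; apply: contraTneq Q_gt0 => ->; rewrite /qform mulmx0 dot0r ltxx.
have yp := dot_iter_dir_ge0 (cg_regularW (leqnSn J) reg).
rewrite leNgt; apply/negP => lt_alpha.
move: le_norm; rewrite (cg_yS cg) -(ler_pXn2r (_ : 0 < 2)%N) ?nnegrE ?enorm_ge0 //.
rewrite !enorm_sq !dotDl !dotDr !dotZl !dotZr [dot (p J) (y J)]dotC.
have : 0 < (sigma - alpha J) * (2 * dot (y J) (p J) + (sigma + alpha J) * dot (p J) (p J)).
  by rewrite mulr_gt0 ?subr_gt0 // ltr_wpDl ?mulr_ge0 // mulr_gt0 // ltr_wpDl.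
nra.
Qed.

Lemma cg_boundary_decrease J (sigma : R) : cg_regular J.+1 -> 0 <= sigma ->
  enorm (y J + sigma *: p J) <= enorm (y J.+1) ->
  0 <= - dot g (y J + sigma *: p J) - 2^-1 * qform A (y J + sigma *: p J).
Proof.
move=> reg sigma_ge0 le_norm; have [Q_gt0 _] := reg J (ltnSn J).
have le_alpha := boundary_le_stepsize reg sigma_ge0 le_norm.
have regJ := cg_regularW (leqnSn J) reg.
rewrite cg_decrease_along_dir // -cg_stepsizeK ?lt0r_neq0 //.
have := qform_iter_ge0 regJ.
have : 0 <= sigma * qform A (p J) * (alpha J - sigma / 2).
  by apply: mulr_ge0; [apply: mulr_ge0 => //; apply: ltW | lra].
nra.
Qed.

End ConjugateGradient.

Section TruncatedCG.
Variables (R : realType) (n : nat) (g : 'cV[R]_n) (H : 'M[R]_n) (eps : R).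

Definition cg_iter j := (cg_state g H eps j).1.1.
Definition cg_res j := (cg_state g H eps j).1.2.
Definition cg_dir j := (cg_state g H eps j).2.

Lemma cg_stateE j : cg_state g H eps j = (cg_iter j, cg_res j, cg_dir j).
Proof. by rewrite /cg_iter /cg_res /cg_dir; case: (cg_state g H eps j) => [[]]. Qed.

Lemma cg_state_recursion : cg_recursion (Hbar H eps) g cg_iter cg_res cg_dir.
Proof. by split=> // j; rewrite /cg_iter /cg_res /cg_dir /=; case: (cg_state g H eps j) => [[]]. Qed.

Lemma Hbar_sym : H^T = H -> (Hbar H eps)^T = Hbar H eps.
Proof. by move=> H_sym; rewrite /Hbar linearD /= tr_scalar_mx H_sym. Qed.

Lemma qform_Hbar s : qform (Hbar H eps) s = qform H s + 2 * eps * enorm s ^+ 2.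
Proof. by rewrite /qform /Hbar mulmxDl mul_scalar_mx dotDr dotZr enorm_sq. Qed.

Lemma cg_continues_regular delta zeta capCG M J :
  g != 0 -> 0 <= eps -> 0 <= zeta ->
  (forall j, (j < J)%N -> cg_continues g H eps delta zeta capCG M j) ->
  cg_regular (Hbar H eps) cg_res cg_dir J /\ cg_res J != 0.
Proof.
move=> g_neq0 eps_ge0 zeta_ge0 cont.
have res_neq0 i : (i <= J)%N -> cg_res i != 0.
  case: i => [|i] // lt_iJ.
  have := cont i lt_iJ; rewrite /cg_continues !cg_stateE; cbv iota beta.
  move=> [_ [_ [_ lt_res]]]; rewrite -enorm_gt0; apply: le_lt_trans lt_res.
  by rewrite mulr_ge0 ?divr_ge0 // le_min enorm_ge0 mulr_ge0 ?enorm_ge0.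
split=> [i lt_iJ|]; last exact: res_neq0.
split; last exact: res_neq0 (ltnW lt_iJ).
have := cont i lt_iJ; rewrite /cg_continues !cg_stateE; cbv iota beta.
by move=> [_ [curv _]]; apply: le_lt_trans curv; rewrite mulr_ge0 ?sqr_ge0.
Qed.

Lemma cg_output_decrease delta zeta capCG M s fl :
  H^T = H -> g != 0 -> 0 <= eps -> 0 <= zeta ->
  cg_output g H eps delta zeta capCG M s fl ->
  eps / 2 * enorm s ^+ 2 <= - dot g s - 2^-1 * qform H s.
Proof.
move=> H_sym g_neq0 eps_ge0 zeta_ge0 [J [cont ret]].
suff : - (eps / 2) * enorm s ^+ 2 <= - dot g s - 2^-1 * qform (Hbar H eps) s.
  by rewrite qform_Hbar; lra.
have A_sym := Hbar_sym H_sym; have cg := cg_state_recursion.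
have [reg resJ_neq0] := cg_continues_regular g_neq0 eps_ge0 zeta_ge0 cont.
have regS : eps * enorm (cg_dir J) ^+ 2 < qform (Hbar H eps) (cg_dir J) ->
    cg_regular (Hbar H eps) cg_res cg_dir J.+1.
  move=> curv i; rewrite ltnS leq_eqVlt => /predU1P[-> | ]; last exact: reg.
  by split=> //; apply: le_lt_trans curv; rewrite mulr_ge0 ?sqr_ge0.
have le0 (v : 'cV[R]_n) : - (eps / 2) * enorm v ^+ 2 <= 0.
  by rewrite mulNr oppr_le0 mulr_ge0 ?divr_ge0 ?sqr_ge0.
move: ret; rewrite /cg_returns !cg_stateE; cbv iota beta.
case=> [[_ [-> _]] | [_ [[curv [[sigma [sigma_ge0 [-> _]]] _]]
  | [[curv [le_delta [[sigma [sigma_ge0 [-> norm_s]]] _]]] | [curv [_ [_ [-> _]]]]]]]].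
- exact: le_trans (le0 _) (cg_iter_decrease A_sym cg reg).
- exact (cg_negcurv_decrease A_sym cg reg sigma_ge0 eps_ge0 curv).
- apply: le_trans (le0 _) (cg_boundary_decrease A_sym cg (regS curv) sigma_ge0 _).
  by rewrite norm_s.
- exact: le_trans (le0 _) (cg_iter_decrease A_sym cg (regS curv)).
Qed.

End TruncatedCG.

Lemma model_decrease (R : realType) n fk (gk : 'cV[R]_n) Hk xk s :
  model fk gk Hk xk xk - model fk gk Hk xk (xk + s) = - dot gk s - 2^-1 * qform Hk s.
Proof. by rewrite /model [xk + s]addrC addrK subrr /qform mulmx0 !dot0r; ring. Qed.

Lemma meo_step_decrease (R : realType) n (g : 'cV[R]_n) H eps delta s :
  meo_step g H eps delta s -> 4^-1 * eps * enorm s ^+ 2 <= - dot g s - 2^-1 * qform H s.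
Proof. by move=> [_ [_ [_ [_ [gs_le0 [negcurv _]]]]]]; lra. Qed.

Theorem lemma4p1 (R : realType) (n : nat) (P : tr_params R)
  (f : 'cV[R]_n -> R) (g : 'cV[R]_n -> 'cV[R]_n) (H : 'cV[R]_n -> 'M[R]_n)
  (Lg : R) (x0 : 'cV[R]_n) (x : nat -> 'cV[R]_n) (d : nat -> R)
  (s : nat -> 'cV[R]_n) (T : option nat) :
  valid_params P ->
  C2_grad_hess f g H ->
  (forall y, symmetric_mx (H y)) ->
  (forall y z, enorm (g y - g z) <= Lg * enorm (y - z)) ->
  Lg <= Mc P ->
  alg4_run P f g H x0 x d s T ->
  forall k, in_K T k ->
    model (f (x k)) (g (x k)) (H (x k)) (x k) (x k)
      - model (f (x k)) (g (x k)) (H (x k)) (x k) (x k + s k)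
    >= 4^-1 * eps_H P * enorm (s k) ^+ 2.
Proof.
move=> [eps_g_gt0 [eps_H_gt0 [_ [_ [_ [_ [_ [_ [/andP[zeta_gt0 _] _]]]]]]]]] _ H_sym _ _.
move=> [_ [_ [run _]]] k /run[[sCG [out [cg_out step]]] _].
rewrite model_decrease.
case: ifP step => [use_cg -> | _ /meo_step_decrease //].
case: ifP cg_out => [g_neq0 cg_out | /negbFE/eqP g0 [_ out_res]]; last first.
  by move: use_cg; rewrite out_res g0 /= /enorm dot0r sqrtr0 ltNge ltW.
apply: le_trans (cg_output_decrease (H_sym _) g_neq0 (ltW eps_H_gt0) (ltW zeta_gt0) cg_out).
by rewrite ler_wpM2r ?sqr_ge0 //; lra.
Qed.
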